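(* Assume CH. There exists a set $A\subseteq\mathbb{R}^2$ which is a Hamel basis of $\mathbb{R}^2$ over $\mathbb{Q}$ and such that for every straight line $l\subseteq\mathbb{R}^2$ and every isometry $T:\mathbb{R}\to l$ onto $l$, the set $T^{-1}(A\cap l)$ is a strong Sierpiński subset of $\mathbb{R}$.
   Context: A Sierpiński set is $S\subseteq\mathbb{R}$ with $|S|=\mathfrak{c}$ such that $S\cap N$ is countable for every Lebesgue-null $N\subseteq\mathbb{R}$; it is strong Sierpiński if moreover $S\cap B$ is uncountable for every Borel $B\subseteq\mathbb{R}$ of positive Lebesgue measure. A Hamel basis of $\mathbb{R}^2$ is a basis over $\mathbb{Q}$. *)

From Stdlib Require Import Reals QArith Qreals List.
Open Scope R_scope.

Definition countable (S : R -> Prop) : Prop :=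
  exists f : R -> nat, forall x y, S x -> S y -> f x = f y -> x = y.

Definition has_card_continuum (S : R -> Prop) : Prop :=
  exists f : R -> R,
    (forall x y, f x = f y -> x = y) /\
    (forall x, S (f x)) /\
    (forall y, S y -> exists x, f x = y).

Definition CH : Prop :=
  forall S : R -> Prop, countable S \/ has_card_continuum S.

Definition interval_cover (a b : nat -> R) (N : R -> Prop) : Prop :=
  (forall n, a n <= b n) /\
  (forall x, N x -> exists n, a n <= x <= b n).

(* Total length of the first n+1 intervals. *)
Definition cover_len (a b : nat -> R) (n : nat) : R :=
  sum_f_R0 (fun k => b k - a k) n.

Definition lebesgue_null (N : R -> Prop) : Prop :=
  forall eps, 0 < eps ->
    exists a b, interval_cover a b N /\ forall n, cover_len a b n < eps.

Definition positive_measure (B : R -> Prop) : Prop :=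
  exists eps, 0 < eps /\
    forall a b, interval_cover a b B -> ~ (forall n, cover_len a b n < eps).

Inductive borel : (R -> Prop) -> Prop :=
  | borel_interval : forall c d : R, borel (fun x => c < x < d)
  | borel_compl : forall B, borel B -> borel (fun x => ~ B x)
  | borel_union : forall F : nat -> R -> Prop,
      (forall n, borel (F n)) -> borel (fun x => exists n, F n x).

Definition sierpinski (S : R -> Prop) : Prop :=
  has_card_continuum S /\
  forall N, lebesgue_null N -> countable (fun x => S x /\ N x).

Definition strong_sierpinski (S : R -> Prop) : Prop :=
  sierpinski S /\
  forall B, borel B -> positive_measure B -> ~ countable (fun x => S x /\ B x).

Definition R2 := (R * R)%type.

Definition dist2 (p q : R2) : R :=
  sqrt ((fst p - fst q)^2 + (snd p - snd q)^2).

Fixpoint lincomb (l : list (Q * R2)) : R2 :=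
  match l with
  | nil => (0, 0)
  | (q, v) :: l' =>
      let s := lincomb l' in (Q2R q * fst v + fst s, Q2R q * snd v + snd s)
  end.

Definition Q_lin_indep (A : R2 -> Prop) : Prop :=
  forall l : list (Q * R2),
    NoDup (map snd l) -> Forall (fun p => A (snd p)) l ->
    lincomb l = (0, 0) -> Forall (fun p => (fst p == 0)%Q) l.

Definition Q_spans (A : R2 -> Prop) : Prop :=
  forall v : R2, exists l : list (Q * R2),
    Forall (fun p => A (snd p)) l /\ lincomb l = v.

Definition hamel_basis (A : R2 -> Prop) : Prop := Q_lin_indep A /\ Q_spans A.

Definition line (p d : R2) : R2 -> Prop :=
  fun z => exists t : R, z = (fst p + t * fst d, snd p + t * snd d).

Definition isometry_onto (T : R -> R2) (L : R2 -> Prop) : Prop :=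
  (forall x y, dist2 (T x) (T y) = Rabs (x - y)) /\
  (forall x, L (T x)) /\
  (forall z, L z -> exists x, T x = z).

(** Under CH, well-order R so that every proper initial segment is countable, and let
    each stage handle one task, every task being listed at continuum many stages: span a
    given vector of R^2, keep later points off a given null G_delta set on a given line,
    or put a point on a given Borel set of positive measure on a given line.  A stage adds
    at most two points, each Q-independent of the countably many points chosen before.
    On a line, the Q-span of those points is countable and the points to be kept off lie
    in countably many traces of null sets, so the excluded parameters form a null set,
    which misses some point of R and of every set of positive measure.  Then a null set on
    a line contains only points chosen before the corresponding stage, countably many,
    while a Borel set of positive measure on a line receives points at uncountably many
    stages. *)

From Stdlib Require Import Reals QArith Qreals List.
From Stdlib Require Import Lra Lia Classical ClassicalEpsilon FunctionalExtensionality
  PropExtensionality Cantor Arith FinFun Wellfounded.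
From mathcomp Require wochoice boolp Rstruct.
Open Scope R_scope.

Arguments to_nat : simpl never.

Definition countable_set {T : Type} (S : T -> Prop) : Prop :=
  exists f : T -> nat, forall x y, S x -> S y -> f x = f y -> x = y.

Lemma countable_subset {T} (S S' : T -> Prop) :
  countable_set S' -> (forall x, S x -> S' x) -> countable_set S.
Proof. intros [f Hf] H; exists f; intros x y Hx Hy; apply Hf; auto. Qed.

Lemma countable_setU {T} (S S' : T -> Prop) :
  countable_set S -> countable_set S' -> countable_set (fun x => S x \/ S' x).
Proof.
  intros [f Hf] [g Hg].
  exists (fun x => match excluded_middle_informative (S x) with
                   | left _ => 2 * f x | right _ => 2 * g x + 1 end)%nat.
  intros x y Hx Hy.
  destruct (excluded_middle_informative (S x)) as [sx|sx];
  destruct (excluded_middle_informative (S y)) as [sy|sy]; intros E.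
  - apply Hf; auto; lia.
  - lia.
  - lia.
  - apply Hg; [destruct Hx; tauto | destruct Hy; tauto | lia].
Qed.

Lemma countable_set1 {T} (a : T) : countable_set (fun x => x = a).
Proof. exists (fun _ => 0%nat); intros x y -> -> _; reflexivity. Qed.

Lemma countable_preimage {T U} (S : U -> Prop) (g : T -> U) :
  countable_set S -> (forall x y, g x = g y -> x = y) -> countable_set (fun x => S (g x)).
Proof.
  intros [f Hf] Hg; exists (fun x => f (g x)); intros x y Hx Hy E; apply Hg, Hf; auto.
Qed.

Lemma countable_image {T U} (S : T -> Prop) (g : T -> U) :
  countable_set S -> countable_set (fun y => exists x, S x /\ y = g x).
Proof.
  intros [f Hf].
  exists (fun y => match excluded_middle_informative (exists x, S x /\ y = g x) with
                   | left H => f (proj1_sig (constructive_indefinite_description _ H))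
                   | right _ => 0%nat end).
  intros y1 y2 H1 H2.
  destruct (excluded_middle_informative _) as [e1|]; [|contradiction].
  destruct (excluded_middle_informative _) as [e2|]; [|contradiction].
  destruct (constructive_indefinite_description _ e1) as [x1 [Sx1 E1]].
  destruct (constructive_indefinite_description _ e2) as [x2 [Sx2 E2]]; simpl.
  intros E; subst; f_equal; apply Hf; auto.
Qed.

Lemma countable_setX_nat {T} (X : T -> Prop) :
  countable_set X -> countable_set (fun p : T * nat => X (fst p)).
Proof.
  intros [g Hg]; exists (fun p => to_nat (g (fst p), snd p)).
  intros [a i] [b j] Ha Hb E; simpl in *; apply to_nat_inj in E; injection E; intros; subst.
  f_equal; apply Hg; auto.
Qed.

Lemma countable_bigcup_list {I T : Type} (X : I -> Prop) (h : I -> list T) :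
  countable_set X -> countable_set (fun w => exists a, X a /\ In w (h a)).
Proof.
  intros HX; destruct (classic (inhabited T)) as [[d]|HT].
  - apply countable_subset with
      (fun w => exists p, X (fst p) /\ w = nth (snd p) (h (fst p)) d).
    + apply countable_image, countable_setX_nat, HX.
    + intros w [a [Ha Hw]]; destruct (In_nth _ _ d Hw) as [i [_ Hi]].
      exists (a, i); auto.
  - exists (fun _ => 0%nat); intros x; exfalso; apply HT; constructor; exact x.
Qed.

(** * Negligible sets *)

Definition sum_list {T : Type} (len : T -> R) (F : list T) : R :=
  fold_right (fun n s => len n + s) 0 F.

Lemma sum_list_app {T} (len : T -> R) F G :
  sum_list len (F ++ G) = sum_list len F + sum_list len G.
Proof. induction F; simpl; [lra|rewrite IHF; lra]. Qed.

Lemma sum_list_ge0 {T} (len : T -> R) F : (forall n, 0 <= len n) -> 0 <= sum_list len F.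
Proof. intros H; induction F; simpl; [lra|specialize (H a); lra]. Qed.

Lemma sum_list_incl {T} (len : T -> R) (F G : list T) :
  (forall n, 0 <= len n) -> NoDup F -> incl F G -> sum_list len F <= sum_list len G.
Proof.
  intros Hpos HF; revert G; induction HF as [|x F' Hx HF' IH]; intros G HI.
  - simpl; apply sum_list_ge0; auto.
  - assert (Hin : In x G) by (apply HI; left; auto).
    destruct (in_split _ _ Hin) as [G1 [G2 ->]].
    rewrite sum_list_app; simpl.
    assert (IH' : sum_list len F' <= sum_list len (G1 ++ G2)).
    { apply IH; intros y Hy.
      assert (In y (G1 ++ x :: G2)) by (apply HI; right; auto).
      apply in_app_or in H; apply in_or_app; destruct H as [H|[H|H]]; auto.
      subst; contradiction. }
    rewrite sum_list_app in IH'; lra.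
Qed.

Lemma sum_f_R0_sum_list (len : nat -> R) M : sum_f_R0 len M = sum_list len (seq 0 (S M)).
Proof.
  induction M; [simpl; lra|].
  replace (sum_f_R0 len (S M)) with (sum_f_R0 len M + len (S M)) by reflexivity.
  rewrite IHM, (seq_S (S M) 0), sum_list_app. simpl. lra.
Qed.

Lemma sum_list_le_sum_f_R0 (len : nat -> R) F M :
  (forall n, 0 <= len n) -> NoDup F -> (forall n, In n F -> (n <= M)%nat) ->
  sum_list len F <= sum_f_R0 len M.
Proof.
  intros Hp HF HM; rewrite sum_f_R0_sum_list; apply sum_list_incl; auto.
  intros n Hn; apply in_seq; specialize (HM n Hn); lia.
Qed.

Lemma list_nat_bounded (F : list nat) : exists M, forall n, In n F -> (n <= M)%nat.
Proof.
  induction F as [|a F [M HM]]; [exists 0%nat; intros n []|].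
  exists (Nat.max a M); intros n [->|H]; [lia|specialize (HM n H); lia].
Qed.

(** A reformulation of [lebesgue_null] that is invariant under reindexing the cover:
    every finite subfamily of the cover is short. *)
Definition negligible (N : R -> Prop) : Prop :=
  forall eps, 0 < eps -> exists a b : nat -> R,
    (forall n, a n <= b n) /\ (forall x, N x -> exists n, a n <= x <= b n) /\
    forall F, NoDup F -> sum_list (fun n => b n - a n) F <= eps.

Lemma negligible_subset (N M : R -> Prop) :
  negligible M -> (forall x, N x -> M x) -> negligible N.
Proof.
  intros H HNM eps Heps; destruct (H eps Heps) as [a [b [H1 [H2 H3]]]].
  exists a, b; repeat split; auto.
Qed.

Lemma lebesgue_null_negligible N : lebesgue_null N -> negligible N.
Proof.
  intros H eps Heps; destruct (H eps Heps) as [a [b [[H1 H2] H3]]].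
  exists a, b; repeat split; auto.
  intros F HF; destruct (list_nat_bounded F) as [M HM].
  apply Rle_trans with (cover_len a b M).
  - apply sum_list_le_sum_f_R0; auto; intros n; specialize (H1 n); lra.
  - left; apply H3.
Qed.

Lemma positive_measure_not_negligible_subset B N :
  positive_measure B -> negligible N -> ~ (forall x, B x -> N x).
Proof.
  intros [eps [Heps HB]] HN Hsub.
  destruct (HN (eps/2)) as [a [b [H1 [H2 H3]]]]; [lra|].
  apply (HB a b); [split; auto|].
  intros n; unfold cover_len; rewrite sum_f_R0_sum_list.
  specialize (H3 (seq 0 (S n)) (seq_NoDup _ _)); lra.
Qed.
Lemma sum_f_R0_indicator_out (g : nat -> R) k0 K : (K < k0)%nat ->
  sum_f_R0 (fun k => if Nat.eqb k0 k then g k else 0) K = 0.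
Proof.
  intros H; induction K.
  - simpl; destruct (Nat.eqb_spec k0 0); [lia|reflexivity].
  - simpl; rewrite IHK by lia; destruct (Nat.eqb_spec k0 (S K)); [lia|lra].
Qed.

Lemma sum_f_R0_indicator (g : nat -> R) k0 K : (k0 <= K)%nat ->
  sum_f_R0 (fun k => if Nat.eqb k0 k then g k else 0) K = g k0.
Proof.
  intros H; induction K.
  - assert (k0 = 0%nat) by lia; subst; reflexivity.
  - simpl; destruct (Nat.eqb_spec k0 (S K)).
    + subst; rewrite sum_f_R0_indicator_out by lia; lra.
    + rewrite IHK by lia; lra.
Qed.

Lemma sum_f_R0_zero K : sum_f_R0 (fun _ => 0) K = 0.
Proof. induction K; simpl; [lra|rewrite IHK; lra]. Qed.

Definition row (k : nat) (G : list (nat * nat)) : list nat :=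
  map snd (filter (fun p => Nat.eqb (fst p) k) G).

Lemma sum_list_by_rows (h : nat * nat -> R) G K :
  (forall p, In p G -> (fst p <= K)%nat) ->
  sum_list h G = sum_f_R0 (fun k => sum_list (fun j => h (k, j)) (row k G)) K.
Proof.
  induction G as [|p G IH]; intros HK.
  - unfold row; simpl; rewrite sum_f_R0_zero; reflexivity.
  - simpl sum_list at 1. rewrite IH by (intros; apply HK; right; auto).
    transitivity (sum_f_R0 (fun k => (if Nat.eqb (fst p) k then h (k, snd p) else 0) +
                                   sum_list (fun j => h (k, j)) (row k G)) K).
    + rewrite sum_plus, (sum_f_R0_indicator (fun k => h (k, snd p)))
        by (apply HK; left; auto).
      destruct p; reflexivity.
    + apply sum_eq; intros k _. unfold row; simpl.
      destruct (Nat.eqb_spec (fst p) k); simpl; [subst; destruct p; reflexivity|lra].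
Qed.

Lemma row_NoDup k G : NoDup G -> NoDup (row k G).
Proof.
  unfold row; induction 1 as [|p G Hp HG IH]; simpl; [constructor|].
  destruct (Nat.eqb_spec (fst p) k); simpl; auto.
  constructor; auto.
  intros Hin; apply in_map_iff in Hin; destruct Hin as [q [Eq Hq]].
  apply filter_In in Hq; destruct Hq as [Hq Hk]; apply Nat.eqb_eq in Hk.
  apply Hp; replace p with q; auto; destruct p, q; simpl in *; subst; reflexivity.
Qed.

Lemma sum_f_R0_geometric eps K :
  sum_f_R0 (fun k => eps / 2 ^ (k + 2)) K = eps / 2 - eps / 2 ^ (K + 2).
Proof.
  induction K.
  - simpl; field.
  - simpl sum_f_R0; rewrite IHK. replace (S K + 2)%nat with (S (K + 2)) by lia. simpl.
    field; apply pow_nonzero; lra.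
Qed.

Lemma negligible_bigcup (N : nat -> R -> Prop) :
  (forall n, negligible (N n)) -> negligible (fun x => exists n, N n x).
Proof.
  intros HN eps Heps.
  assert (Hc : forall n, { ab : (nat -> R) * (nat -> R) |
     (forall m, fst ab m <= snd ab m) /\
     (forall x, N n x -> exists m, fst ab m <= x <= snd ab m) /\
     forall F, NoDup F -> sum_list (fun m => snd ab m - fst ab m) F <= eps / 2 ^ (n + 2) }).
  { intros n; apply constructive_indefinite_description.
    assert (0 < eps / 2 ^ (n + 2)) by (apply Rdiv_lt_0_compat; [lra|apply pow_lt; lra]).
    destruct (HN n _ H) as [a [b Hab]]; exists (a, b); exact Hab. }
  set (len := fun p : nat * nat =>
    snd (proj1_sig (Hc (fst p))) (snd p) - fst (proj1_sig (Hc (fst p))) (snd p)).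
  exists (fun m => fst (proj1_sig (Hc (fst (of_nat m)))) (snd (of_nat m))),
         (fun m => snd (proj1_sig (Hc (fst (of_nat m)))) (snd (of_nat m))).
  split; [|split].
  - intros m; apply (proj2_sig (Hc (fst (of_nat m)))).
  - intros x [n Hx]; destruct (proj2_sig (Hc n)) as [_ [H2 _]].
    destruct (H2 x Hx) as [j Hj]; exists (to_nat (n, j)).
    rewrite cancel_of_to; exact Hj.
  - intros F HF.
    replace (sum_list _ F) with (sum_list len (map of_nat F))
      by (clear; induction F; simpl; [reflexivity|rewrite IHF; reflexivity]).
    assert (HG : NoDup (map of_nat F))
      by (apply Injective_map_NoDup; auto; intros x y; apply of_nat_inj).
    destruct (list_nat_bounded (map fst (map of_nat F))) as [K HK].
    rewrite (sum_list_by_rows len _ K) by (intros p Hp; apply HK, in_map; auto).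
    apply Rle_trans with (sum_f_R0 (fun k => eps / 2 ^ (k + 2)) K).
    + apply sum_Rle; intros k _.
      apply (proj2_sig (Hc k)), row_NoDup, HG.
    + rewrite sum_f_R0_geometric.
      assert (0 < eps / 2 ^ (K + 2)) by (apply Rdiv_lt_0_compat; [lra|apply pow_lt; lra]).
      lra.
Qed.

Lemma negligible_subsingleton (P : R -> Prop) :
  (forall x y, P x -> P y -> x = y) -> negligible P.
Proof.
  intros H eps Heps.
  assert (Hnil : forall x0 F, sum_list (fun _ : nat => x0 - x0) F <= eps)
    by (intros x0 F; induction F; simpl; lra).
  destruct (classic (exists x, P x)) as [[x0 Hx0]|Hn].
  - exists (fun _ => x0), (fun _ => x0); split; [intros; lra|split; auto].
    intros x Hx; exists 0%nat; rewrite (H x x0 Hx Hx0); lra.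
  - exists (fun _ => 0), (fun _ => 0); split; [intros; lra|split; auto].
    intros x Hx; exfalso; eauto.
Qed.

Lemma negligible_setU (N M : R -> Prop) :
  negligible N -> negligible M -> negligible (fun x => N x \/ M x).
Proof.
  intros HN HM.
  apply negligible_subset with (fun x => exists n, (if Nat.eqb n 0 then N else M) x).
  - apply negligible_bigcup; intros [|n]; simpl; auto.
  - intros x [H|H]; [exists 0%nat|exists 1%nat]; auto.
Qed.

Lemma negligible_countable_bigcup {I} (S : I -> Prop) (N : I -> R -> Prop) :
  countable_set S -> (forall i, S i -> negligible (N i)) ->
  negligible (fun x => exists i, S i /\ N i x).
Proof.
  intros [g Hg] HN.
  apply negligible_subset with (fun x => exists n, exists i, S i /\ g i = n /\ N i x).
  - apply negligible_bigcup; intros n.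
    destruct (classic (exists i, S i /\ g i = n)) as [[i [Si Ei]]|Hn].
    + apply negligible_subset with (N i); [apply HN; auto|].
      intros x [j [Sj [Ej Hj]]]; replace i with j; auto; apply Hg; auto; congruence.
    + apply negligible_subsingleton; intros x y [i [Si [Ei _]]]; exfalso; eauto.
  - intros x [i [Si Hi]]; exists (g i), i; auto.
Qed.

Lemma countable_negligible (P : R -> Prop) : countable_set P -> negligible P.
Proof.
  intros Hc; apply negligible_subset with (fun x => exists i, P i /\ x = i).
  - apply negligible_countable_bigcup; auto.
    intros i _; apply negligible_subsingleton; intros; congruence.
  - intros x Hx; exists x; auto.
Qed.

Lemma sum_list_ext {T} (f g : T -> R) F : (forall n, f n = g n) -> sum_list f F = sum_list g F.
Proof. intros H; induction F; simpl; [reflexivity|rewrite IHF, H; reflexivity]. Qed.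

Lemma negligible_affine (N : R -> Prop) s c :
  negligible N -> (s = 1 \/ s = -1) -> negligible (fun t => N (s * t + c)).
Proof.
  intros HN Hs eps Heps; destruct (HN eps Heps) as [a [b [H1 [H2 H3]]]].
  destruct Hs as [->| ->].
  - exists (fun n => a n - c), (fun n => b n - c); split; [intros n; specialize (H1 n); lra|split].
    + intros x Hx; destruct (H2 _ Hx) as [n Hn]; exists n; lra.
    + intros F HF; rewrite (sum_list_ext _ (fun n => b n - a n)) by (intros; ring); auto.
  - exists (fun n => c - b n), (fun n => c - a n); split; [intros n; specialize (H1 n); lra|split].
    + intros x Hx; destruct (H2 _ Hx) as [n Hn]; exists n; lra.
    + intros F HF; rewrite (sum_list_ext _ (fun n => b n - a n)) by (intros; ring); auto.
Qed.
Lemma open_cover_length (c d : nat -> R) : (forall n, c n < d n) ->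
  forall (L : list nat) x y, NoDup L -> x <= y ->
  (forall z, x <= z <= y -> exists n, In n L /\ c n < z < d n) ->
  y - x <= sum_list (fun n => d n - c n) L.
Proof.
  intros Hcd L; remember (length L) as k eqn:HL; revert L HL.
  induction k as [k IH] using lt_wf_ind; intros L HL x y HN Hxy Hcov.
  destruct (Hcov y (conj Hxy (Rle_refl y))) as [j [Hj Hy]].
  destruct (in_split _ _ Hj) as [L1 [L2 ->]].
  rewrite sum_list_app; simpl.
  assert (Hnn : forall L, 0 <= sum_list (fun n => d n - c n) L)
    by (intros; apply sum_list_ge0; intros n; specialize (Hcd n); lra).
  destruct (Rlt_or_le (c j) x) as [Hlt|Hle].
  - pose proof (Hnn L1); pose proof (Hnn L2); lra.
  - (* the interval containing y covers [c j, y]; the others cover [x, c j] *)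
    assert (IH' : c j - x <= sum_list (fun n => d n - c n) (L1 ++ L2)).
    { apply (IH (length (L1 ++ L2))); auto.
      - rewrite HL, !length_app; simpl; lia.
      - eapply NoDup_remove_1; eauto.
      - intros z Hz; destruct (Hcov z) as [n [Hn Hzn]]; [lra|].
        exists n; split; auto.
        apply in_app_or in Hn; apply in_or_app; destruct Hn as [H|[H|H]]; auto.
        subst; lra. }
    rewrite sum_list_app in IH'; lra.
Qed.

Definition nat_of_R (r : R) : nat := epsilon (inhabits 0%nat) (fun n => r = INR n).

Lemma nat_of_R_INR n : nat_of_R (INR n) = n.
Proof.
  unfold nat_of_R; apply INR_eq; symmetry.
  apply (epsilon_spec (inhabits 0%nat) (fun m => INR n = INR m)); exists n; auto.
Qed.

Lemma unit_interval_finite_subcover (c d : nat -> R) :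
  (forall z, 0 <= z <= 1 -> exists n, c n < z < d n) ->
  exists L, NoDup L /\ forall z, 0 <= z <= 1 -> exists n, In n L /\ c n < z < d n.
Proof.
  intros Hcov.
  assert (Hcf : forall x : R, (exists y, (fun r z => exists n, r = INR n /\ c n < z < d n) x y) ->
                              (fun r => exists n : nat, r = INR n) x)
    by (intros x [y [n [-> _]]]; exists n; auto).
  set (fam := mkfamily (fun r => exists n : nat, r = INR n)
                       (fun r z => exists n, r = INR n /\ c n < z < d n) Hcf).
  assert (Hop : covering_open_set (fun z => 0 <= z <= 1) fam).
  { split.
    - intros z Hz; destruct (Hcov z Hz) as [n Hn]; exists (INR n); simpl; exists n; auto.
    - intros r z [n [-> Hz]].
      assert (Hpos : 0 < Rmin (z - c n) (d n - z)) by (apply Rmin_pos; lra).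
      exists (mkposreal _ Hpos); intros w Hw; unfold disc in Hw; simpl in Hw.
      exists n; split; auto.
      pose proof (Rmin_l (z - c n) (d n - z)); pose proof (Rmin_r (z - c n) (d n - z)).
      apply Rabs_def2 in Hw; lra. }
  destruct (compact_P3 0 1 fam Hop) as [D [Hfc [l Hl]]].
  exists (nodup Nat.eq_dec (map nat_of_R l)); split; [apply NoDup_nodup|].
  intros z Hz; destruct (Hfc z Hz) as [r [[n [-> Hn]] HD]].
  exists n; split; auto. apply nodup_In.
  rewrite <- (nat_of_R_INR n); apply in_map, Hl; split; auto; exists n; auto.
Qed.

(** The closed intervals are enlarged to open ones of total extra length 1/4. *)
Lemma cover_len_unit_interval (a b : nat -> R) :
  interval_cover a b (fun x => 0 <= x <= 1) -> exists n, 3/4 <= cover_len a b n.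
Proof.
  intros [Hab Hcov].
  set (dl := fun n : nat => (1/2) / 2 ^ (n + 3)).
  assert (Hdl : forall n, 0 < dl n)
    by (intros; unfold dl; apply Rdiv_lt_0_compat; [lra|apply pow_lt; lra]).
  set (c := fun n => a n - dl n). set (d := fun n => b n + dl n).
  destruct (unit_interval_finite_subcover c d) as [L [HLnd HL]].
  { intros z Hz; destruct (Hcov z Hz) as [n Hn]; exists n.
    specialize (Hdl n); unfold c, d; lra. }
  assert (H1 := open_cover_length c d
                  ltac:(intros n; unfold c, d; specialize (Hab n); specialize (Hdl n); lra)
                  L 0 1 HLnd ltac:(lra) HL).
  destruct (list_nat_bounded L) as [M HM].
  exists M.
  assert (E : sum_list (fun n => d n - c n) L =
              sum_list (fun n => b n - a n) L + sum_list (fun n => (1/2) / 2 ^ (n + 2)) L).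
  { clear - L. induction L; simpl; [lra|rewrite IHL; unfold c, d, dl].
    replace (a0 + 3)%nat with (S (a0 + 2)) by lia; simpl; field; apply pow_nonzero; lra. }
  assert (H2 : sum_list (fun n => b n - a n) L <= cover_len a b M)
    by (apply sum_list_le_sum_f_R0; auto; intros n; specialize (Hab n); lra).
  assert (H3 : sum_list (fun n => (1/2) / 2 ^ (n + 2)) L
               <= sum_f_R0 (fun k => (1/2) / 2 ^ (k + 2)) M).
  { apply sum_list_le_sum_f_R0; auto.
    intros n; apply Rlt_le, Rdiv_lt_0_compat; [lra|apply pow_lt; lra]. }
  rewrite sum_f_R0_geometric in H3.
  assert (0 < (1/2) / 2 ^ (M + 2)) by (apply Rdiv_lt_0_compat; [lra|apply pow_lt; lra]).
  lra.
Qed.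

(** The whole line, written as a Borel set. *)
Definition whole_line : R -> Prop := fun x => ~ (1 < x < 0).

Lemma borel_whole_line : borel whole_line.
Proof. apply borel_compl, borel_interval. Qed.

Lemma positive_measure_whole_line : positive_measure whole_line.
Proof.
  exists (1/2); split; [lra|].
  intros a b [H1 H2] Hlt.
  destruct (cover_len_unit_interval a b) as [n Hn].
  - split; auto; intros x Hx; apply H2; unfold whole_line; lra.
  - specialize (Hlt n); lra.
Qed.

Lemma positive_measure_avoid B N :
  positive_measure B -> negligible N -> exists x, B x /\ ~ N x.
Proof.
  intros HB HN; apply NNPP; intros Hn.
  apply (positive_measure_not_negligible_subset B N HB HN).
  intros x Hx; apply NNPP; intros H; apply Hn; exists x; auto.
Qed.

Lemma negligible_avoid N : negligible N -> exists x, ~ N x.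
Proof.
  intros HN; destruct (positive_measure_avoid _ N positive_measure_whole_line HN)
    as [x [_ Hx]]; eauto.
Qed.

(** * Rational linear algebra in the plane *)

Definition vadd (x y : R2) : R2 := (fst x + fst y, snd x + snd y).
Definition vscal (r : R) (x : R2) : R2 := (r * fst x, r * snd x).
Definition vsub (v z : R2) : R2 := (fst v - fst z, snd v - snd z).

Ltac pair_eq := apply injective_projections; simpl; try ring.

Definition qspan (X : R2 -> Prop) (v : R2) : Prop :=
  exists l, Forall (fun p => X (snd p)) l /\ lincomb l = v.

Lemma lincomb_app l1 l2 : lincomb (l1 ++ l2) = vadd (lincomb l1) (lincomb l2).
Proof.
  induction l1 as [|[q v] l IH]; simpl.
  - unfold vadd; simpl; pair_eq.
  - rewrite IH; unfold vadd; simpl; pair_eq.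
Qed.

Lemma qspan_in X z : X z -> qspan X z.
Proof.
  intros H; exists ((1%Q, z) :: nil); split; [repeat constructor; auto|].
  simpl; rewrite RMicromega.Q2R_1; pair_eq.
Qed.

Lemma qspan0 X : qspan X (0, 0).
Proof. exists nil; split; auto. Qed.

Lemma qspanD X v w : qspan X v -> qspan X w -> qspan X (vadd v w).
Proof.
  intros [l1 [H1 E1]] [l2 [H2 E2]]; exists (l1 ++ l2); split.
  - apply Forall_app; auto.
  - rewrite lincomb_app; congruence.
Qed.

Lemma qspanZ X q v : qspan X v -> qspan X (vscal (Q2R q) v).
Proof.
  intros [l [H E]]; exists (map (fun p => (q * fst p, snd p)%Q) l); split.
  - apply Forall_map; eapply Forall_impl; [|exact H]; auto.
  - subst; induction l as [|[q' w] l IH]; simpl; [unfold vscal; simpl; pair_eq|].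
    inversion H; subst; rewrite IH by auto; unfold vscal; simpl; rewrite Q2R_mult; pair_eq.
Qed.

Lemma qspan_mono (X Y : R2 -> Prop) v : (forall w, X w -> Y w) -> qspan X v -> qspan Y v.
Proof.
  intros HXY [l [H E]]; exists l; split; auto; eapply Forall_impl; [|exact H]; auto.
Qed.

Lemma qspan_extend X z v : qspan (fun w => X w \/ w = z) v ->
  exists s q, qspan X s /\ v = vadd s (vscal (Q2R q) z).
Proof.
  intros [l [H E]]; subst v; induction l as [|[q w] l IH].
  - exists (0, 0), 0%Q; split; [apply qspan0|].
    rewrite RMicromega.Q2R_0; unfold vadd, vscal; simpl; pair_eq.
  - inversion H; subst. destruct (IH H3) as [s [q' [Hs Es]]].
    simpl in H2; destruct H2 as [Hw| ->].
    + exists (vadd (vscal (Q2R q) w) s), q'; split.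
      * apply qspanD; auto. apply qspanZ, qspan_in; auto.
      * simpl; rewrite Es; unfold vadd, vscal; simpl; pair_eq.
    + exists s, (q + q')%Q; split; auto.
      simpl; rewrite Es, Q2R_plus; unfold vadd, vscal; simpl; pair_eq.
Qed.

Lemma Q2R_neq0 q : ~ (q == 0)%Q -> Q2R q <> 0.
Proof. intros Hq C; apply Hq, eqR_Qeq; rewrite C, RMicromega.Q2R_0; reflexivity. Qed.

(** Exchange: if [v] is new over [D] and [z] is new over [D + v], then [v - z] is new
    over [D + z]; this is how a vector [v] gets spanned by two admissible points. *)
Lemma qspan_exchange D v z :
  ~ qspan D v -> ~ qspan (fun w => D w \/ w = v) z ->
  ~ qspan (fun w => D w \/ w = z) (vsub v z).
Proof.
  intros Hv Hz H; destruct (qspan_extend _ _ _ H) as [s [q [Hs E]]].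
  destruct v as [v1 v2], z as [z1 z2], s as [s1 s2];
    unfold vsub, vadd, vscal in E; simpl in E; injection E; intros E2 E1.
  destruct (Qeq_dec (q + 1) 0) as [Hq|Hq].
  - apply Hv; replace (v1, v2) with (s1, s2); auto.
    apply Qeq_eqR in Hq; rewrite Q2R_plus, RMicromega.Q2R_1, RMicromega.Q2R_0 in Hq.
    f_equal; nra.
  - apply Hz.
    pose proof (Q2R_neq0 _ Hq) as Hr; rewrite Q2R_plus, RMicromega.Q2R_1 in Hr.
    replace (z1, z2) with (vadd (vscal (Q2R (/ (q + 1))) (v1, v2))
                                (vscal (Q2R (- / (q + 1))) (s1, s2))).
    + apply qspanD; apply qspanZ; [apply qspan_in; auto|].
      eapply qspan_mono; [|exact Hs]; auto.
    + rewrite Q2R_opp, Q2R_inv, Q2R_plus, RMicromega.Q2R_1 by auto.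
      unfold vadd, vscal; simpl. f_equal; field_simplify_eq; auto; nra.
Qed.

Definition nat_of_Z (z : Z) : nat :=
  match z with Z0 => 0 | Zpos p => 2 * Pos.to_nat p | Zneg p => 2 * Pos.to_nat p + 1 end%nat.

Lemma nat_of_Z_inj z1 z2 : nat_of_Z z1 = nat_of_Z z2 -> z1 = z2.
Proof.
  destruct z1 as [|p1|p1], z2 as [|p2|p2]; simpl; intros H;
  try (pose proof (Pos2Nat.is_pos p1)); try (pose proof (Pos2Nat.is_pos p2)); try lia;
  f_equal; apply Pos2Nat.inj; lia.
Qed.

Definition nat_of_Q (q : Q) : nat := to_nat (nat_of_Z (Qnum q), Pos.to_nat (Qden q)).

Lemma nat_of_Q_inj q1 q2 : nat_of_Q q1 = nat_of_Q q2 -> q1 = q2.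
Proof.
  unfold nat_of_Q; intros H; apply to_nat_inj in H; injection H; intros H2 H1.
  destruct q1, q2; simpl in *; f_equal; [apply nat_of_Z_inj|apply Pos2Nat.inj]; auto.
Qed.

Fixpoint nat_of_list (l : list (Q * nat)) : nat :=
  match l with
  | nil => 0%nat
  | x :: l' => S (to_nat (to_nat (nat_of_Q (fst x), snd x), nat_of_list l'))
  end.

Lemma nat_of_list_inj l1 l2 : nat_of_list l1 = nat_of_list l2 -> l1 = l2.
Proof.
  revert l2; induction l1 as [|[q n] l1 IH]; intros [|[q' n'] l2]; simpl;
    try discriminate; auto.
  intros H; injection H; intros H'; apply to_nat_inj in H'; injection H'; intros E2 E1.
  apply to_nat_inj in E1; injection E1; intros; f_equal; [f_equal|]; auto.
  apply nat_of_Q_inj; auto.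
Qed.

Lemma countable_qspan X : countable_set X -> countable_set (qspan X).
Proof.
  intros [f Hf].
  apply countable_subset with
    (fun y => exists l, Forall (fun p => X (snd p)) l /\ y = lincomb l).
  - apply countable_image. exists (fun l => nat_of_list (map (fun p => (fst p, f (snd p))) l)).
    intros l1 l2 H1 H2 E; apply nat_of_list_inj in E.
    revert l2 H2 E; induction l1 as [|[q v] l1 IH]; intros [|[q' v'] l2];
      simpl; try discriminate; auto.
    intros H2 E; injection E; intros E3 E2 E1; inversion H1; inversion H2; subst.
    f_equal; [f_equal; apply Hf; auto|apply IH; auto].
  - intros y [l [H E]]; exists l; auto.
Qed.

Section RankedIndependence.

Variables (K : Type) (A : R2 -> Prop) (rank : R2 -> K -> Prop) (lt : K -> K -> Prop).
Hypothesis rank_total : forall z, A z -> exists k, rank z k.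
Hypothesis rank_inj : forall z w k, rank z k -> rank w k -> z = w.
Hypothesis lt_trichotomy : forall k1 k2, lt k1 k2 \/ k1 = k2 \/ lt k2 k1.
Hypothesis lt_trans : forall k1 k2 k3, lt k1 k2 -> lt k2 k3 -> lt k1 k3.
Hypothesis rank_new :
  forall z k, rank z k -> ~ qspan (fun w => exists k', rank w k' /\ lt k' k) z.

Lemma exists_max_rank (l : list R2) : l <> nil -> (forall w, In w l -> A w) ->
  exists m k, In m l /\ rank m k /\
    forall w, In w l -> w <> m -> exists k', rank w k' /\ lt k' k.
Proof.
  induction l as [|x l IH]; intros Hne HAl; [congruence|].
  destruct (rank_total x) as [kx Hkx]; [apply HAl; left; auto|].
  destruct l as [|y l'].
  - exists x, kx; split; [left; auto|split; auto]. intros w [->|[]]; congruence.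
  - destruct IH as [m [k [Hm [Hk Hmax]]]]; [congruence|intros; apply HAl; right; auto|].
    destruct (lt_trichotomy kx k) as [Hl|[He|Hg]].
    + exists m, k; split; [right; auto|split; auto].
      intros w [<-|Hw] Hwm; [exists kx; auto|apply Hmax; auto].
    + subst; exists m, k; split; [right; auto|split; auto].
      intros w [<-|Hw] Hwm; [exfalso; apply Hwm; eapply rank_inj; eauto|apply Hmax; auto].
    + exists x, kx; split; [left; auto|split; auto].
      intros w [<-|Hw] Hwm; [congruence|].
      destruct (classic (w = m)) as [->|Hne']; [exists k; auto|].
      destruct (Hmax w Hw Hne') as [k' [Hk' Hlt]]; exists k'; split; eauto.
Qed.

(** A vanishing combination with a nonzero coefficient at the element [m] of maximal
    rank would put [m] in the span of elements of smaller rank. *)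
Lemma Q_lin_indep_ranked : Q_lin_indep A.
Proof.
  intros l; remember (length l) as n; revert l Heqn.
  induction n as [|n IH]; intros l Hn Hnd HAl E.
  { destruct l; [constructor|simpl in Hn; discriminate]. }
  assert (Hne : map snd l <> nil) by (destruct l; simpl in *; congruence).
  destruct (exists_max_rank (map snd l) Hne) as [m [k [Hm [Hk Hmax]]]].
  { intros w Hw; apply in_map_iff in Hw; destruct Hw as [p [<- Hp]].
    rewrite Forall_forall in HAl; apply HAl; auto. }
  apply in_map_iff in Hm; destruct Hm as [[q m'] [Em Hqm]]; simpl in Em; subst m'.
  destruct (in_split _ _ Hqm) as [l1 [l2 ->]].
  rewrite map_app in Hnd; simpl in Hnd.
  assert (Hnd' := NoDup_remove_1 _ _ _ Hnd). assert (Hnm := NoDup_remove_2 _ _ _ Hnd).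
  rewrite lincomb_app in E; simpl in E.
  apply Forall_app in HAl; destruct HAl as [HA1 HA2]; inversion HA2; subst.
  destruct (Qeq_dec q 0) as [Hq|Hq].
  - assert (E' : lincomb (l1 ++ l2) = (0, 0)).
    { rewrite lincomb_app. apply Qeq_eqR in Hq; rewrite RMicromega.Q2R_0 in Hq; rewrite Hq in E.
      unfold vadd in *; simpl in *. destruct (lincomb l1), (lincomb l2); simpl in *.
      injection E; intros; f_equal; lra. }
    rewrite length_app in Hn; simpl in Hn.
    assert (IH' := IH (l1 ++ l2) ltac:(rewrite length_app; lia) ltac:(rewrite map_app; auto)
                      ltac:(apply Forall_app; auto) E').
    apply Forall_app in IH'; destruct IH'; apply Forall_app; auto.
  - exfalso. apply (rank_new m k Hk).
    pose proof (Q2R_neq0 _ Hq) as Hr.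
    replace m with (vscal (Q2R (- / q)) (lincomb (l1 ++ l2))).
    + apply qspanZ. exists (l1 ++ l2); split; auto.
      apply Forall_forall; intros [q' w] Hw; simpl.
      apply (in_map snd) in Hw; simpl in Hw.
      apply Hmax; [rewrite map_app in *; apply in_or_app; apply in_app_or in Hw;
                   destruct Hw; [left|right; right]; auto|].
      intros ->; apply Hnm; rewrite <- map_app; exact Hw.
    + rewrite Q2R_opp, Q2R_inv by auto. rewrite lincomb_app.
      unfold vadd, vscal in *; simpl in *. destruct (lincomb l1), (lincomb l2), m; simpl in *.
      injection E; intros E2 E1. f_equal; field_simplify_eq; auto; lra.
Qed.

End RankedIndependence.

(** * Lines and isometries *)

Definition line_point (c u : R2) (t : R) : R2 := (fst c + t * fst u, snd c + t * snd u).
Definition unit_vector (u : R2) : Prop := fst u * fst u + snd u * snd u = 1.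

Lemma line_point_inj c u t1 t2 :
  unit_vector u -> line_point c u t1 = line_point c u t2 -> t1 = t2.
Proof.
  unfold unit_vector, line_point; intros Hu E; injection E; intros E2 E1.
  destruct (Req_dec t1 t2) as [|Hne]; auto.
  assert (fst u = 0) by (apply (Rmult_eq_reg_l (t1 - t2)); lra).
  assert (snd u = 0) by (apply (Rmult_eq_reg_l (t1 - t2)); lra).
  rewrite H, H0 in Hu; lra.
Qed.

Lemma dist2_sqr p q r : dist2 p q = r -> (fst p - fst q) ^ 2 + (snd p - snd q) ^ 2 = r * r.
Proof.
  unfold dist2; intros <-. rewrite sqrt_sqrt; [ring|].
  apply Rplus_le_le_0_compat; apply pow2_ge_0.
Qed.

(** From [|T x - T 0| = |x|], [|T x - T 1| = |x - 1|] and [|T 1 - T 0| = 1] one gets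
    [<T x - T 0, T 1 - T 0> = x], and then [|T x - T 0 - x (T 1 - T 0)|^2 = 0]. *)
Lemma isometry_line_point (T : R -> R2) :
  (forall x y, dist2 (T x) (T y) = Rabs (x - y)) ->
  unit_vector (vsub (T 1) (T 0)) /\ forall x, T x = line_point (T 0) (vsub (T 1) (T 0)) x.
Proof.
  intros H.
  assert (H10 := dist2_sqr _ _ _ (H 1 0)).
  replace (Rabs (1 - 0) * Rabs (1 - 0)) with 1 in H10 by (rewrite Rminus_0_r, Rabs_R1; ring).
  split; [unfold unit_vector, vsub; simpl; lra|].
  intros x.
  assert (Hsq : forall r, Rabs r * Rabs r = r * r)
    by (intros r; rewrite <- Rabs_mult; apply Rabs_pos_eq; nra).
  assert (Hx0 := dist2_sqr _ _ _ (H x 0)). assert (Hx1 := dist2_sqr _ _ _ (H x 1)).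
  rewrite Hsq in Hx0, Hx1.
  destruct (T 0) as [p0 q0], (T 1) as [p1 q1], (T x) as [px qx];
    unfold line_point, vsub; cbn [fst snd] in *.
  assert (Hab : (p1 - p0) * (px - p0) + (q1 - q0) * (qx - q0) = x) by nra.
  assert (Z : (px - p0 - x * (p1 - p0)) ^ 2 + (qx - q0 - x * (q1 - q0)) ^ 2 = 0) by nra.
  pose proof (pow2_ge_0 (px - p0 - x * (p1 - p0))).
  pose proof (pow2_ge_0 (qx - q0 - x * (q1 - q0))).
  f_equal; nra.
Qed.

Lemma negligible_parallel_trace (N : R -> Prop) c u c' u' :
  negligible N -> unit_vector u -> unit_vector u' ->
  fst u * snd u' - snd u * fst u' = 0 ->
  negligible (fun t => exists x, N x /\ line_point c u t = line_point c' u' x).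
Proof.
  unfold unit_vector; intros HN Hu Hu' Hd.
  set (e := fst u * fst u' + snd u * snd u').
  assert (E1 : fst u' = e * fst u).
  { replace (e * fst u) with (fst u' * (fst u * fst u + snd u * snd u)
                               + snd u * (fst u * snd u' - snd u * fst u')) by (unfold e; ring).
    rewrite Hu, Hd; ring. }
  assert (E2 : snd u' = e * snd u).
  { replace (e * snd u) with (snd u' * (fst u * fst u + snd u * snd u)
                               - fst u * (fst u * snd u' - snd u * fst u')) by (unfold e; ring).
    rewrite Hu, Hd; ring. }
  assert (He : e * e = 1) by (rewrite E1, E2 in Hu'; nra).
  assert (Hs : e = 1 \/ e = -1) by (destruct (Rle_or_lt 0 e); [left|right]; nra).
  set (s0 := fst c * fst u + snd c * snd u - (fst c' * fst u + snd c' * snd u)).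
  apply negligible_subset with (fun t => N (e * t + e * s0)).
  - apply negligible_affine; auto.
  - intros t [x [Hx E]]; unfold line_point in E; injection E; intros F2 F1.
    replace (e * t + e * s0) with x; auto.
    assert (K2 : t + s0 = x * e).
    { unfold s0, e; replace t with (t * (fst u * fst u + snd u * snd u)) by (rewrite Hu; ring).
      assert (K : fst u * (fst c + t * fst u) + snd u * (snd c + t * snd u) =
                  fst u * (fst c' + x * fst u') + snd u * (snd c' + x * snd u'))
        by (rewrite F1, F2; ring).
      revert K; clear; intros K; lra. }
    replace (e * t + e * s0) with (e * (t + s0)) by ring. rewrite K2.
    replace (e * (x * e)) with (x * (e * e)) by ring. rewrite He; ring.
Qed.

Lemma line_trace_transversal c u c' u' t1 t2 x1 x2 :
  fst u * snd u' - snd u * fst u' <> 0 ->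
  line_point c u t1 = line_point c' u' x1 -> line_point c u t2 = line_point c' u' x2 ->
  t1 = t2.
Proof.
  intros Hd E1 E2; unfold line_point in *; injection E1; injection E2; intros G4 G3 G2 G1.
  apply Rminus_diag_uniq; apply (Rmult_eq_reg_r (fst u * snd u' - snd u * fst u')); [|auto].
  assert (H1 : (t1 - t2) * fst u = (x1 - x2) * fst u') by lra.
  assert (H2 : (t1 - t2) * snd u = (x1 - x2) * snd u') by lra.
  replace ((t1 - t2) * (fst u * snd u' - snd u * fst u')) with
    (((t1 - t2) * fst u) * snd u' - ((t1 - t2) * snd u) * fst u') by ring.
  rewrite H1, H2; ring.
Qed.

Lemma negligible_line_trace (N : R -> Prop) c u c' u' :
  negligible N -> unit_vector u -> unit_vector u' ->
  negligible (fun t => exists x, N x /\ line_point c u t = line_point c' u' x).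
Proof.
  intros HN Hu Hu'.
  destruct (Req_dec (fst u * snd u' - snd u * fst u') 0) as [Hd|Hd].
  - apply negligible_parallel_trace; auto.
  - apply negligible_subsingleton; intros t1 t2 [x1 [_ E1]] [x2 [_ E2]].
    eapply line_trace_transversal; eauto.
Qed.

(** * Coding countable data by reals *)

Fixpoint ternary_partial (f : nat -> bool) (N : nat) : R :=
  match N with
  | O => 0
  | S N' => ternary_partial f N' + (if f N' then 1 else 0) / 3 ^ (S N')
  end.

Lemma ternary_partial_tail f k j :
  ternary_partial f (k + j) <= ternary_partial f k + (1/2) / 3 ^ k - (1/2) / 3 ^ (k + j).
Proof.
  induction j.
  - rewrite Nat.add_0_r; lra.
  - replace (k + S j)%nat with (S (k + j)) by lia.
    change (ternary_partial f (S (k + j))) with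
      (ternary_partial f (k + j) + (if f (k + j)%nat then 1 else 0) / 3 ^ S (k + j)).
    assert (H3 : 0 < 3 ^ (k + j)) by (apply pow_lt; lra).
    assert (E : (1/2) / 3 ^ (k + j) - (1/2) / 3 ^ (S (k + j)) = 1 / 3 ^ (S (k + j)))
      by (simpl; field; lra).
    assert ((if f (k + j)%nat then 1 else 0) / 3 ^ S (k + j) <= 1 / 3 ^ S (k + j)).
    { apply Rmult_le_compat_r; [apply Rlt_le, Rinv_0_lt_compat; simpl; lra|].
      destruct (f _); lra. }
    lra.
Qed.

Lemma ternary_partial_mono f N M : (N <= M)%nat -> ternary_partial f N <= ternary_partial f M.
Proof.
  intros H; induction H; [lra|].
  change (ternary_partial f (S m)) with (ternary_partial f m + (if f m then 1 else 0) / 3 ^ S m).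
  assert (0 <= (if f m then 1 else 0) / 3 ^ S m).
  { apply Rmult_le_pos; [destruct (f m); lra|].
    apply Rlt_le, Rinv_0_lt_compat, pow_lt; lra. }
  lra.
Qed.

Lemma ternary_partial_ext f g k :
  (forall m, (m < k)%nat -> f m = g m) -> ternary_partial f k = ternary_partial g k.
Proof.
  induction k; intros H; simpl; [reflexivity|].
  rewrite IHk by (intros; apply H; lia). rewrite (H k) by lia. reflexivity.
Qed.

Lemma ternary_partial_bounded f : bound (fun x => exists N, x = ternary_partial f N).
Proof.
  exists (1/2); intros x [N ->].
  pose proof (ternary_partial_tail f 0 N); simpl in *.
  assert (0 < (1/2) / 3 ^ N) by (apply Rdiv_lt_0_compat; [lra|apply pow_lt; lra]). lra.
Qed.

Lemma ternary_partial_inhabited f : exists x, exists N, x = ternary_partial f N.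
Proof. exists 0, 0%nat; reflexivity. Qed.

Definition ternary (f : nat -> bool) : R :=
  proj1_sig (completeness _ (ternary_partial_bounded f) (ternary_partial_inhabited f)).

Lemma ternary_partial_le f N : ternary_partial f N <= ternary f.
Proof.
  unfold ternary; apply (proj2_sig (completeness _ _ _)); exists N; auto.
Qed.

Lemma ternary_le f M : (forall N, ternary_partial f N <= M) -> ternary f <= M.
Proof.
  intros H; unfold ternary; apply (proj2_sig (completeness _ _ _)).
  intros x [N ->]; auto.
Qed.

(** Digits are 0 or 1 in base 3, so the first differing digit decides the order. *)
Lemma ternary_lt f g k :
  (forall m, (m < k)%nat -> f m = g m) -> f k = true -> g k = false -> ternary g < ternary f.
Proof.
  intros Hag Hf Hg.
  assert (E1 : ternary_partial f (S k) = ternary_partial g k + 1 / 3 ^ S k)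
    by (simpl; rewrite Hf, (ternary_partial_ext f g k Hag); reflexivity).
  assert (E2 : ternary_partial g (S k) = ternary_partial g k)
    by (simpl; rewrite Hg; unfold Rdiv; ring).
  assert (H1 := ternary_partial_le f (S k)).
  assert (Hp : 0 < 3 ^ S k) by (apply pow_lt; lra).
  assert (H2 : ternary g <= ternary_partial g k + (1/2) / 3 ^ S k).
  { apply ternary_le; intros N. destruct (Nat.le_gt_cases N (S k)) as [HN|HN].
    - pose proof (ternary_partial_mono g _ _ HN).
      assert (0 < (1/2) / 3 ^ S k) by (apply Rdiv_lt_0_compat; lra). lra.
    - replace N with (S k + (N - S k))%nat by lia.
      pose proof (ternary_partial_tail g (S k) (N - S k)).
      assert (0 < (1/2) / 3 ^ (S k + (N - S k)))
        by (apply Rdiv_lt_0_compat; [lra|apply pow_lt; lra]). lra. }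
  assert (1 / 3 ^ S k > (1/2) / 3 ^ S k)
    by (apply Rmult_lt_compat_r; [apply Rinv_0_lt_compat; auto|lra]).
  lra.
Qed.

Lemma least_witness (P : nat -> Prop) :
  (exists n, P n) -> exists k, P k /\ forall m, (m < k)%nat -> ~ P m.
Proof.
  intros [n Hn]. revert Hn; induction n as [n IH] using lt_wf_ind; intros Hn.
  destruct (classic (exists m, (m < n)%nat /\ P m)) as [[m [Hm Pm]]|H].
  - apply (IH m Hm Pm).
  - exists n; split; auto; intros m Hm Pm; apply H; eauto.
Qed.

Lemma ternary_inj f g : ternary f = ternary g -> f = g.
Proof.
  intros E; apply NNPP; intros Hne.
  assert (Hex : exists n, f n <> g n).
  { apply NNPP; intros H; apply Hne, functional_extensionality; intros n.
    apply NNPP; intros H'; apply H; eauto. }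
  destruct (least_witness _ Hex) as [k [Hk Hmin]].
  assert (Hag : forall m, (m < k)%nat -> f m = g m) by (intros m Hm; apply NNPP; auto).
  destruct (f k) eqn:Ef, (g k) eqn:Eg; try congruence.
  - pose proof (ternary_lt f g k Hag Ef Eg); lra.
  - pose proof (ternary_lt g f k ltac:(intros; symmetry; auto) Eg Ef); lra.
Qed.

Lemma R_uncountable : ~ countable_set (fun _ : R => True).
Proof.
  intros [f Hf].
  set (g := fun h => f (ternary h)).
  assert (Hg : forall h1 h2, g h1 = g h2 -> h1 = h2) by (intros; apply ternary_inj, Hf; auto).
  set (inv := fun n => epsilon (inhabits (fun _ : nat => true)) (fun h => g h = n)).
  set (d := fun n => negb (inv n n)).
  assert (Hinv : inv (g d) = d).
  { apply Hg; unfold inv.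
    apply (epsilon_spec (inhabits (fun _ : nat => true)) (fun h => g h = g d)); eauto. }
  assert (F : d (g d) = negb (d (g d))).
  { change (d (g d)) with (negb (inv (g d) (g d))) at 1. rewrite Hinv; reflexivity. }
  destruct (d (g d)); discriminate.
Qed.

Definition Q_of_nat (n : nat) : Q :=
  let (a, m) := of_nat n in let (b, s) := of_nat m in
  Qmake (if Nat.eqb s 0 then Z.of_nat a else (- Z.of_nat a)%Z) (Pos.of_succ_nat b).

Lemma Q_of_nat_surj q : exists n, Q_of_nat n = q.
Proof.
  destruct q as [z p].
  destruct (Pos2Nat.is_succ p) as [b Hb].
  exists (to_nat (Z.abs_nat z, to_nat (b, if (z <? 0)%Z then 1%nat else 0%nat))).
  unfold Q_of_nat; rewrite !cancel_of_to.
  f_equal; [|apply SuccNat2Pos.inv; auto].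
  destruct (Z.ltb_spec z 0); simpl; lia.
Qed.

Lemma exists_Q_between x y : x < y -> exists q, x < Q2R q < y.
Proof.
  intros Hxy.
  destruct (INR_archimed (y - x) 1) as [N HN]; [lra|].
  set (n := S N).
  assert (Hn : INR n * (y - x) > 1) by (unfold n; rewrite S_INR; pose proof (pos_INR N); nra).
  assert (Hpos : 0 < INR n) by (unfold n; apply lt_0_INR; lia).
  destruct (archimed (x * INR n)) as [H1 H2].
  exists (Qmake (up (x * INR n)) (Pos.of_succ_nat N)).
  unfold Q2R; cbn [Qnum Qden]. rewrite Znat.Zpos_P_of_succ_nat, succ_IZR, <- INR_IZR_INZ.
  replace (INR N + 1) with (INR n) by (unfold n; rewrite S_INR; ring).
  assert (Ee : IZR (up (x * INR n)) * / INR n * INR n = IZR (up (x * INR n))) by (field; lra).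
  split; apply Rmult_lt_reg_r with (INR n); auto; rewrite Ee; lra.
Qed.

Definition rat_cut (x : R) : nat -> bool :=
  fun n => if Rlt_dec (Q2R (Q_of_nat n)) x then true else false.

Lemma rat_cut_inj x y : rat_cut x = rat_cut y -> x = y.
Proof.
  intros E.
  assert (K : forall x y, x < y -> rat_cut x <> rat_cut y).
  { clear; intros x y Hxy E. destruct (exists_Q_between _ _ Hxy) as [q Hq].
    destruct (Q_of_nat_surj q) as [n Hn].
    assert (F := equal_f E n); unfold rat_cut in F; rewrite Hn in F.
    destruct (Rlt_dec (Q2R q) x), (Rlt_dec (Q2R q) y); try discriminate; lra. }
  destruct (total_order_T x y) as [[H|H]|H]; auto.
  - exfalso; apply (K x y H E).
  - exfalso; apply (K y x H); auto.
Qed.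

Definition seq_code (h : nat -> R) : R :=
  ternary (fun n => rat_cut (h (fst (of_nat n))) (snd (of_nat n))).

Lemma seq_code_inj h h' : seq_code h = seq_code h' -> h = h'.
Proof.
  unfold seq_code; intros E; apply ternary_inj in E.
  apply functional_extensionality; intros i; apply rat_cut_inj, functional_extensionality; intros j.
  assert (F := equal_f E (to_nat (i, j))); simpl in F; rewrite cancel_of_to in F; exact F.
Qed.

(** The length is stored first, so that lists differing by trailing zeros get
    different codes. *)
Definition list_code (l : list R) : R :=
  seq_code (fun k => match k with O => INR (length l) | S k' => nth k' l 0 end).

Lemma list_code_inj l l' : list_code l = list_code l' -> l = l'.
Proof.
  unfold list_code; intros E; apply seq_code_inj in E.
  assert (Hlen := INR_eq _ _ (equal_f E 0%nat)).
  apply nth_ext with 0 0; auto; intros n _; apply (equal_f E (S n)).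
Qed.

Definition double_seq_code (a : nat -> nat -> R) : R :=
  seq_code (fun n => a (fst (of_nat n)) (snd (of_nat n))).

Lemma double_seq_code_inj a b : double_seq_code a = double_seq_code b -> a = b.
Proof.
  unfold double_seq_code; intros H; apply seq_code_inj in H.
  apply functional_extensionality; intros i; apply functional_extensionality; intros j.
  assert (F := equal_f H (to_nat (i, j))); cbv beta in F; rewrite cancel_of_to in F; auto.
Qed.

Definition R2_code (v : R2) : R := list_code (fst v :: snd v :: nil).

Lemma R2_code_inj v w : R2_code v = R2_code w -> v = w.
Proof.
  intros H; apply list_code_inj in H; injection H; intros.
  destruct v, w; simpl in *; congruence.
Qed.

Inductive borel_code : Type :=
  | BInterval (c d : R)
  | BCompl (b : borel_code)
  | BUnion (f : nat -> borel_code).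

Fixpoint code_set (b : borel_code) : R -> Prop :=
  match b with
  | BInterval c d => fun x => c < x < d
  | BCompl b' => fun x => ~ code_set b' x
  | BUnion f => fun x => exists n, code_set (f n) x
  end.

Lemma borel_has_code B : borel B -> exists b, forall x, B x <-> code_set b x.
Proof.
  induction 1 as [c d|B HB [b Hb]|F HF IH].
  - exists (BInterval c d); simpl; tauto.
  - exists (BCompl b); simpl; intros x; rewrite Hb; tauto.
  - assert (Hc : forall n, {b : borel_code | forall x, F n x <-> code_set b x})
      by (intros n; apply constructive_indefinite_description, IH).
    exists (BUnion (fun n => proj1_sig (Hc n))); simpl; intros x; split;
      intros [n Hn]; exists n; apply (proj2_sig (Hc n)); auto.
Qed.

(** A Borel code is determined by the values at its nodes, each node being addressed
    by the list of branch indices leading to it. *)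
Fixpoint borel_code_node (b : borel_code) (s : list nat) : R :=
  match b, s with
  | BInterval c d, nil => list_code (1 :: c :: d :: nil)
  | BCompl _, nil => list_code (2 :: nil)
  | BUnion _, nil => list_code (3 :: nil)
  | BInterval _ _, _ :: _ => 0
  | BCompl b', _ :: s' => borel_code_node b' s'
  | BUnion f, n :: s' => borel_code_node (f n) s'
  end.

Lemma borel_code_node_inj b1 b2 :
  (forall s, borel_code_node b1 s = borel_code_node b2 s) -> b1 = b2.
Proof.
  revert b2; induction b1 as [c d|b1 IH|f IH]; intros [c' d'|b2|f2] H;
    pose proof (list_code_inj _ _ (H nil)) as E; simpl in E; inversion E; try lra.
  - reflexivity.
  - f_equal; apply IH; intros s; apply (H (0%nat :: s)).
  - f_equal; apply functional_extensionality; intros n; apply IH; intros s; apply (H (n :: s)).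
Qed.

Definition nat_of_nat_list (l : list nat) : nat := nat_of_list (map (fun n => (0%Q, n)) l).

Lemma nat_of_nat_list_inj l1 l2 : nat_of_nat_list l1 = nat_of_nat_list l2 -> l1 = l2.
Proof.
  unfold nat_of_nat_list; intros H; apply nat_of_list_inj in H.
  revert l2 H; induction l1; intros [|b l2]; simpl; intros H; try discriminate; auto.
  injection H; intros; f_equal; auto.
Qed.

Definition nat_list_of_nat (m : nat) : list nat :=
  epsilon (inhabits nil) (fun l => nat_of_nat_list l = m).

Lemma nat_list_of_natK l : nat_list_of_nat (nat_of_nat_list l) = l.
Proof.
  apply nat_of_nat_list_inj; unfold nat_list_of_nat.
  apply (epsilon_spec (inhabits nil) (fun l' => nat_of_nat_list l' = nat_of_nat_list l)); eauto.
Qed.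

Definition borel_code_code (b : borel_code) : R :=
  seq_code (fun m => borel_code_node b (nat_list_of_nat m)).

Lemma borel_code_code_inj b1 b2 : borel_code_code b1 = borel_code_code b2 -> b1 = b2.
Proof.
  unfold borel_code_code; intros H; apply seq_code_inj in H.
  apply borel_code_node_inj; intros s.
  assert (F := equal_f H (nat_of_nat_list s)); cbv beta in F.
  rewrite nat_list_of_natK in F; auto.
Qed.

Lemma negligible_qspan_trace D c u :
  countable_set D -> unit_vector u -> negligible (fun t => qspan D (line_point c u t)).
Proof.
  intros HD Hu; apply countable_negligible, countable_preimage; [apply countable_qspan; auto|].
  intros; eapply line_point_inj; eauto.
Qed.

Lemma unit_vector_e1 : unit_vector (1, 0).
Proof. unfold unit_vector; simpl; ring. Qed.

Lemma unit_vector_opp_e1 : unit_vector (-1, 0).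
Proof. unfold unit_vector; simpl; ring. Qed.

(** * Tasks *)

Definition cover_inter (a b : nat -> nat -> R) (x : R) : Prop :=
  forall k, exists n, a k n <= x <= b k n.

Lemma lebesgue_null_cover_inter N : lebesgue_null N ->
  exists a b, (forall x, N x -> cover_inter a b x) /\ lebesgue_null (cover_inter a b).
Proof.
  intros HN.
  assert (Hc : forall k, {ab : (nat -> R) * (nat -> R) | interval_cover (fst ab) (snd ab) N /\
              forall n, cover_len (fst ab) (snd ab) n < 1 / INR (S k)}).
  { intros k; apply constructive_indefinite_description.
    destruct (HN (1 / INR (S k))) as [a [b H]];
      [apply Rdiv_lt_0_compat; [lra|apply lt_0_INR; lia]|].
    exists (a, b); exact H. }
  exists (fun k => fst (proj1_sig (Hc k))), (fun k => snd (proj1_sig (Hc k))); split.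
  - intros x Hx k; destruct (proj2_sig (Hc k)) as [[_ H] _]; apply H; auto.
  - intros eps Heps.
    destruct (INR_archimed eps 1) as [k Hk]; [lra|].
    exists (fst (proj1_sig (Hc k))), (snd (proj1_sig (Hc k))).
    destruct (proj2_sig (Hc k)) as [[H1 H2] H3]; split; [split|]; auto.
    intros n; apply Rlt_le_trans with (1 / INR (S k)); auto.
    rewrite S_INR. assert (0 <= INR k) by apply pos_INR.
    apply Rmult_le_reg_r with (INR k + 1); [lra|].
    unfold Rdiv. rewrite Rmult_assoc, Rinv_l by lra. nra.
Qed.

(** A null set (resp. a Borel set) on the line [t |-> c + t u] is recorded through
    a null G_delta superset (resp. a Borel code), so that tasks can be coded by reals. *)
Inductive task : Type :=
  | TAvoid (c u : R2) (a b : nat -> nat -> R)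
  | THit (c u : R2) (B : borel_code)
  | TSpan (v : R2).

Definition task_code (k : task) : R :=
  match k with
  | TAvoid c u a b =>
      list_code (0 :: R2_code c :: R2_code u :: double_seq_code a :: double_seq_code b :: nil)
  | THit c u B => list_code (1 :: R2_code c :: R2_code u :: borel_code_code B :: nil)
  | TSpan v => list_code (2 :: R2_code v :: nil)
  end.

Lemma task_code_inj k1 k2 : task_code k1 = task_code k2 -> k1 = k2.
Proof.
  destruct k1, k2; simpl; intros H; apply list_code_inj in H; inversion H; try lra;
    f_equal; try apply R2_code_inj; try apply double_seq_code_inj;
    try apply borel_code_code_inj; auto.
Qed.

(** Every task is the task of the continuum many reals [tagged_task_code k r]. *)
Definition tagged_task_code (k : task) (r : R) : R := list_code (task_code k :: r :: nil).

Lemma tagged_task_code_inj k r k' r' :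
  tagged_task_code k r = tagged_task_code k' r' -> k = k' /\ r = r'.
Proof.
  intros H; apply list_code_inj in H; injection H; intros; split; auto.
  apply task_code_inj; auto.
Qed.

Definition task_of (x : R) : task :=
  match excluded_middle_informative (exists k r, tagged_task_code k r = x) with
  | left H => proj1_sig (constructive_indefinite_description _ H)
  | right _ => TSpan (0, 0)
  end.

Lemma task_of_tagged k r : task_of (tagged_task_code k r) = k.
Proof.
  unfold task_of; destruct excluded_middle_informative as [H|H]; [|exfalso; eauto].
  destruct (constructive_indefinite_description _ H) as [k' [r' E]]; simpl.
  apply tagged_task_code_inj in E; tauto.
Qed.

(** * The transfinite construction *)

Section Construction.

Variable lt : R -> R -> Prop.
Hypothesis lt_wf : well_founded lt.
Hypothesis lt_trichotomy : forall x y, lt x y \/ x = y \/ lt y x.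
Hypothesis lt_trans : forall x y z, lt x y -> lt y z -> lt x z.
Hypothesis lt_countable : forall x, countable_set (fun y => lt y x).

Definition forbidden (al : R) (z : R2) : Prop :=
  exists be, lt be al /\ exists c u a b, task_of be = TAvoid c u a b /\ unit_vector u /\
    lebesgue_null (cover_inter a b) /\ exists x, cover_inter a b x /\ z = line_point c u x.

Definition new_points (D : R2 -> Prop) (l : list R2) : Prop :=
  forall i z, nth_error l i = Some z ->
    ~ qspan (fun w => D w \/ exists j, (j < i)%nat /\ nth_error l j = Some w) z.

Definition task_done (k : task) (D : R2 -> Prop) (l : list R2) : Prop :=
  match k with
  | TAvoid _ _ _ _ => True
  | THit c u b =>
      unit_vector u -> positive_measure (code_set b) ->
      exists t, code_set b t /\ In (line_point c u t) l
  | TSpan v => qspan (fun w => D w \/ In w l) v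
  end.

(** The points [l] added at stage [al], given the set [D] of earlier points. *)
Definition admissible (al : R) (D : R2 -> Prop) (l : list R2) : Prop :=
  new_points D l /\ (forall z, In z l -> ~ forbidden al z) /\ task_done (task_of al) D l.

Lemma new_points_nil D : new_points D nil.
Proof. intros [|i] z H; discriminate. Qed.

Lemma new_points_single D z : ~ qspan D z -> new_points D (z :: nil).
Proof.
  intros Hz [|[|i]] w Hw; simpl in Hw; try discriminate; injection Hw; intros <- Hs.
  apply Hz; eapply qspan_mono; [|exact Hs]; intros w [Hw'|[j [Hj _]]]; [auto|lia].
Qed.

Lemma new_points_pair D z w :
  ~ qspan D z -> ~ qspan (fun y => D y \/ y = z) w -> new_points D (z :: w :: nil).
Proof.
  intros Hz Hw [|[|[|i]]] y Hy; simpl in Hy; try discriminate; injection Hy; intros <- Hs.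
  - apply Hz; eapply qspan_mono; [|exact Hs]; intros y [Hy'|[j [Hj _]]]; [auto|lia].
  - apply Hw; eapply qspan_mono; [|exact Hs]; intros y [Hy'|[j [Hj Hj']]]; [auto|].
    destruct j; [simpl in Hj'; injection Hj'; auto|lia].
Qed.

Lemma negligible_forbidden_trace al c u :
  unit_vector u -> negligible (fun t => forbidden al (line_point c u t)).
Proof.
  intros Hu.
  apply negligible_subset with (fun t => exists be, lt be al /\
    exists c' u' a b, task_of be = TAvoid c' u' a b /\ unit_vector u' /\
      lebesgue_null (cover_inter a b) /\
      exists x, cover_inter a b x /\ line_point c u t = line_point c' u' x).
  - apply negligible_countable_bigcup; auto. intros be _.
    destruct (classic (exists c' u' a b, task_of be = TAvoid c' u' a b /\ unit_vector u' /\
                                         lebesgue_null (cover_inter a b)))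
      as [[c' [u' [a [b [Ht [Hu' Hn]]]]]]|Hno].
    + apply negligible_subset with
        (fun t => exists x, cover_inter a b x /\ line_point c u t = line_point c' u' x).
      * apply negligible_line_trace; auto; apply lebesgue_null_negligible; auto.
      * intros t [c2 [u2 [a2 [b2 [Ht2 [_ [_ Hx]]]]]]].
        rewrite Ht in Ht2; injection Ht2; intros; subst; auto.
    + apply negligible_subsingleton; intros x y [c2 [u2 [a2 [b2 [Ht2 [H1 [H2 _]]]]]]].
      exfalso; apply Hno; eauto 8.
  - intros t [be [Hbe [c' [u' [a [b [H1 [H2 [H3 [x [H4 H5]]]]]]]]]]]; exists be; split; auto.
    exists c', u', a, b; repeat split; auto; exists x; auto.
Qed.

Lemma admissible_hit al D c u b : countable_set D -> task_of al = THit c u b ->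
  exists l, admissible al D l.
Proof.
  intros HD Ht; unfold admissible; rewrite Ht; simpl.
  destruct (classic (unit_vector u /\ positive_measure (code_set b))) as [[Hu Hp]|Hno].
  - destruct (positive_measure_avoid (code_set b) _ Hp
                (negligible_setU _ _ (negligible_qspan_trace D c u HD Hu)
                                     (negligible_forbidden_trace al c u Hu)))
      as [t [Hb Hnot]].
    exists (line_point c u t :: nil); split; [|split].
    + apply new_points_single; auto.
    + intros z [<-|[]] Hf; auto.
    + intros _ _; exists t; split; [auto|left; auto].
  - exists nil; split; [apply new_points_nil|split; [intros z []|]].
    intros Hu Hp; exfalso; auto.
Qed.

(** If [v] is not yet spanned, add [z = (t, 0)] and [v - z] for a [t] avoiding three
    negligible sets: [qspan (D + v)] on the axis, and the forbidden points on the axis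
    and on the line [s |-> v - (s, 0)]. *)
Lemma admissible_span al D v : countable_set D -> task_of al = TSpan v ->
  exists l, admissible al D l.
Proof.
  intros HD Ht; unfold admissible; rewrite Ht; simpl.
  destruct (classic (qspan D v)) as [Hv|Hv].
  { exists nil; split; [apply new_points_nil|split; [intros z []|]].
    eapply qspan_mono; [|exact Hv]; auto. }
  assert (HDv : countable_set (fun w => D w \/ w = v))
    by (apply countable_setU; [auto|apply countable_set1]).
  destruct (negligible_avoid _
             (negligible_setU _ _ (negligible_qspan_trace _ (0, 0) (1, 0) HDv unit_vector_e1)
               (negligible_setU _ _ (negligible_forbidden_trace al (0, 0) (1, 0) unit_vector_e1)
                                    (negligible_forbidden_trace al v (-1, 0) unit_vector_opp_e1))))
    as [t Ht'].
  set (z := line_point (0, 0) (1, 0) t).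
  assert (Ew : line_point v (-1, 0) t = vsub v z)
    by (unfold z, line_point, vsub; simpl; pair_eq).
  assert (Hz1 : ~ qspan (fun w => D w \/ w = v) z) by (intros H; apply Ht'; left; auto).
  exists (z :: vsub v z :: nil); split; [|split].
  - apply new_points_pair; [|apply qspan_exchange; auto].
    intros Hs; apply Hz1; eapply qspan_mono; [|exact Hs]; auto.
  - intros w [<-|[<-|[]]] Hf; apply Ht'; right; [left; auto|right; rewrite Ew; auto].
  - assert (Hs : qspan (fun w => D w \/ In w (z :: vsub v z :: nil)) (vadd z (vsub v z)))
      by (apply qspanD; apply qspan_in; right; simpl; auto).
    replace (vadd z (vsub v z)) with v in Hs by (unfold vadd, vsub; pair_eq); exact Hs.
Qed.

Lemma admissible_exists al D : countable_set D -> exists l, admissible al D l.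
Proof.
  intros HD; destruct (task_of al) as [c u a b|c u b|v] eqn:Ht.
  - exists nil; unfold admissible; rewrite Ht.
    split; [apply new_points_nil|split; [intros z []|exact I]].
  - eapply admissible_hit; eauto.
  - eapply admissible_span; eauto.
Qed.

Definition earlier_points (al : R) (h : R -> list R2) (w : R2) : Prop :=
  exists be, lt be al /\ In w (h be).

Definition stage : R -> list R2 :=
  Fix lt_wf (fun _ => list R2)
    (fun al rec => epsilon (inhabits nil) (admissible al (earlier_points al
       (fun be => match excluded_middle_informative (lt be al) with
                  | left p => rec be p | right _ => nil end)))).

Lemma earlier_points_stage al :
  earlier_points al (fun be => match excluded_middle_informative (lt be al) with
                               | left _ => stage be | right _ => nil end)
  = earlier_points al stage.
Proof.
  apply functional_extensionality; intros w; apply propositional_extensionality.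
  unfold earlier_points; split; intros [be [H1 H2]]; exists be; split; auto;
    destruct (excluded_middle_informative _); auto; contradiction.
Qed.

Lemma stage_admissible al : admissible al (earlier_points al stage) (stage al).
Proof.
  unfold stage at 2; rewrite Fix_eq.
  - fold stage; rewrite earlier_points_stage.
    apply (epsilon_spec (inhabits nil) (admissible al _)), admissible_exists.
    apply countable_bigcup_list, lt_countable.
  - intros x f g Hfg; do 3 f_equal; apply functional_extensionality; intros y.
    destruct (excluded_middle_informative (lt y x)); auto.
Qed.

Definition basis_set (z : R2) : Prop := exists al, In z (stage al).

Lemma stage_unique z a1 a2 : In z (stage a1) -> In z (stage a2) -> a1 = a2.
Proof.
  assert (K : forall a1 a2, lt a1 a2 -> In z (stage a1) -> In z (stage a2) -> False).
  { intros b1 b2 Hlt H1 H2. destruct (In_nth_error _ _ H2) as [i Hi].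
    destruct (stage_admissible b2) as [V _].
    apply (V i z Hi). apply qspan_in; left; exists b1; auto. }
  intros H1 H2; destruct (lt_trichotomy a1 a2) as [H|[H|H]]; auto; exfalso; eauto.
Qed.

(** A point is ranked by its stage and its position within the stage,
    ordered lexicographically. *)
Lemma Q_lin_indep_basis_set : Q_lin_indep basis_set.
Proof.
  apply (Q_lin_indep_ranked (R * nat) basis_set
           (fun z k => nth_error (stage (fst k)) (snd k) = Some z)
           (fun k1 k2 => lt (fst k1) (fst k2) \/ (fst k1 = fst k2 /\ (snd k1 < snd k2)%nat))).
  - intros z [al Hz]; destruct (In_nth_error _ _ Hz) as [i Hi]; exists (al, i); auto.
  - intros z w k H1 H2; rewrite H1 in H2; injection H2; auto.
  - intros [a i] [b j]; simpl. destruct (lt_trichotomy a b) as [H|[H|H]]; auto. subst.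
    destruct (Nat.lt_trichotomy i j) as [H|[H|H]]; auto.
  - intros [a i] [b j] [c k]; simpl; intros [H1|[E1 H1]] [H2|[E2 H2]]; subst; eauto.
    right; split; auto; lia.
  - intros z [al i] Hz; simpl in Hz. destruct (stage_admissible al) as [V _].
    intros Hs; apply (V i z Hz). eapply qspan_mono; [|exact Hs].
    intros w [[be j] [Hw [Hlt|[Eq Hlt]]]]; simpl in *.
    + left; exists be; split; auto; eapply nth_error_In; eauto.
    + subst; right; exists j; auto.
Qed.

Lemma Q_spans_basis_set : Q_spans basis_set.
Proof.
  intros v. set (al := tagged_task_code (TSpan v) 0).
  destruct (stage_admissible al) as [_ [_ Hdone]].
  unfold al in Hdone at 1; rewrite task_of_tagged in Hdone.
  eapply qspan_mono; [|exact Hdone].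
  intros w [[be [_ H]]|H]; [exists be; auto|exists al; auto].
Qed.

Lemma hamel_basis_basis_set : hamel_basis basis_set.
Proof. split; [apply Q_lin_indep_basis_set|apply Q_spans_basis_set]. Qed.

(** Points of [N] on the line are forbidden after the stage [b0] of the task
    [(c, u, N)]. *)
Lemma countable_basis_line_null c u N : unit_vector u -> lebesgue_null N ->
  countable_set (fun x => basis_set (line_point c u x) /\ N x).
Proof.
  intros Hu HN. destruct (lebesgue_null_cover_inter N HN) as [a [b [HNab Hnull]]].
  set (b0 := tagged_task_code (TAvoid c u a b) 0).
  set (early := fun w => exists al, (al = b0 \/ lt al b0) /\ In w (stage al)).
  apply countable_subset with (fun x => early (line_point c u x)).
  - apply (countable_preimage early); [|intros; eapply line_point_inj; eauto].
    apply countable_bigcup_list, countable_setU; [apply countable_set1|auto].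
  - intros x [[al Hal] Hx]; exists al; split; auto.
    destruct (lt_trichotomy al b0) as [H|[H|H]]; auto.
    exfalso. destruct (stage_admissible al) as [_ [Hok _]]. apply (Hok _ Hal).
    exists b0; split; auto. exists c, u, a, b; repeat split; auto.
    + unfold b0; apply task_of_tagged.
    + exists x; split; auto.
Qed.

(** Each stage [tagged_task_code (THit c u b) r] puts a point of [B] on the line, and
    distinct [r] give distinct points by [stage_unique]. *)
Lemma uncountable_basis_line_positive c u B : unit_vector u -> borel B ->
  positive_measure B -> ~ countable_set (fun x => basis_set (line_point c u x) /\ B x).
Proof.
  intros Hu HB Hp [f Hf].
  destruct (borel_has_code B HB) as [b Hb].
  assert (EB : B = code_set b)
    by (apply functional_extensionality; intros x; apply propositional_extensionality; auto).
  subst B.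
  assert (Hpick : forall r, exists t,
    code_set b t /\ In (line_point c u t) (stage (tagged_task_code (THit c u b) r))).
  { intros r; destruct (stage_admissible (tagged_task_code (THit c u b) r)) as [_ [_ Hdone]].
    rewrite task_of_tagged in Hdone; auto. }
  apply R_uncountable.
  exists (fun r => f (epsilon (inhabits 0) (fun t =>
    code_set b t /\ In (line_point c u t) (stage (tagged_task_code (THit c u b) r))))).
  intros r1 r2 _ _ E.
  destruct (epsilon_spec (inhabits 0) _ (Hpick r1)) as [B1 I1].
  destruct (epsilon_spec (inhabits 0) _ (Hpick r2)) as [B2 I2].
  apply Hf in E; [|split; [eexists; eauto|auto]|split; [eexists; eauto|auto]].
  rewrite E in I1.
  apply (tagged_task_code_inj _ _ _ _ (stage_unique _ _ _ I1 I2)).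
Qed.

Lemma strong_sierpinski_basis_line c u : CH -> unit_vector u ->
  strong_sierpinski (fun x => basis_set (line_point c u x)).
Proof.
  intros HCH Hu. split; [split|].
  - destruct (HCH (fun x => basis_set (line_point c u x))) as [Hc|Hc]; auto.
    exfalso; apply (uncountable_basis_line_positive c u whole_line Hu
                      borel_whole_line positive_measure_whole_line).
    apply countable_subset with (fun x => basis_set (line_point c u x)); [exact Hc|tauto].
  - intros N HN; apply countable_basis_line_null; auto.
  - intros B HB Hp Hc; apply (uncountable_basis_line_positive c u B Hu HB Hp Hc).
Qed.

End Construction.

(** * An omega_1-like well-ordering of R *)

Section WellOrdering.
Import eqtype Rstruct.

Lemma R_well_ordering : exists le : R -> R -> Prop,
  forall P : R -> Prop, (exists x, P x) -> exists! z, P z /\ forall x, P x -> le z x.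
Proof.
  destruct (wochoice.well_ordering_principle R) as [r Hr].
  exists (fun x y => r x y = true).
  intros P [x Px].
  destruct (Hr (fun y => boolp.asbool (P y))) as [z [[Hz Hlb] Hu]].
  - exists x; apply boolp.asboolT, Px.
  - exists z; split.
    + split; [apply (boolp.asboolW Hz)|].
      intros y Py; apply Hlb, boolp.asboolT, Py.
    + intros y [Py Hy]; apply Hu; split; [apply boolp.asboolT, Py|].
      intros w Hw; apply Hy, (boolp.asboolW Hw).
Qed.

End WellOrdering.

Lemma R_strict_well_order : exists lt : R -> R -> Prop,
  well_founded lt /\ (forall x y, lt x y \/ x = y \/ lt y x) /\
  (forall x y z, lt x y -> lt y z -> lt x z).
Proof.
  destruct R_well_ordering as [le Hmin].
  assert (Hrefl : forall x, le x x).
  { intros x; destruct (Hmin (fun w => w = x)) as [z [[-> Hz] _]]; eauto. }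
  assert (Hanti : forall x y, le x y -> le y x -> x = y).
  { intros x y Hxy Hyx.
    destruct (Hmin (fun w => w = x \/ w = y)) as [z [_ Hu]]; [eauto|].
    rewrite <- (Hu x), <- (Hu y); auto; split; auto; intros w [->| ->]; auto. }
  assert (Htot : forall x y, le x y \/ le y x).
  { intros x y; destruct (Hmin (fun w => w = x \/ w = y)) as [z [[[->| ->] Hz] _]];
      [eauto|left|right]; auto. }
  assert (Htrans : forall x y z, le x y -> le y z -> le x z).
  { intros x y z Hxy Hyz.
    destruct (Hmin (fun w => w = x \/ w = y \/ w = z)) as [m [[[->|[->| ->]] Hm] _]];
      [eauto|auto|..].
    - rewrite (Hanti x y); auto.
    - rewrite <- (Hanti y z); auto. }
  exists (fun x y => le x y /\ x <> y); split; [|split].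
  - intros a; apply NNPP; intros Ha.
    destruct (Hmin (fun x => ~ Acc (fun x y => le x y /\ x <> y) x)) as [z [[Hz Hzm] _]];
      [eauto|].
    apply Hz; constructor; intros y [Hyz Hne]; apply NNPP; intros Hy.
    apply Hne, Hanti; auto.
  - intros x y; destruct (classic (x = y)); [auto|].
    destruct (Htot x y); [left|right; right]; split; auto.
  - intros x y z [H1 N1] [H2 N2]; split; [eauto|].
    intros ->; apply N1, Hanti; auto.
Qed.

Lemma well_founded_minimal {A : Type} (lt : A -> A -> Prop) (P : A -> Prop) :
  well_founded lt -> (exists x, P x) -> exists z, P z /\ forall y, lt y z -> ~ P y.
Proof.
  intros Hwf [x Px]; induction (Hwf x) as [x _ IH].
  destruct (classic (exists y, lt y x /\ P y)) as [[y [Hy Py]]|Hno]; [eauto|].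
  exists x; split; auto; intros y Hy Py; eauto.
Qed.

(** Transport the order to the first initial segment that is uncountable (if any):
    by CH that segment is in bijection with R. *)
Lemma CH_omega1_order : CH -> exists lt : R -> R -> Prop,
  well_founded lt /\ (forall x y, lt x y \/ x = y \/ lt y x) /\
  (forall x y z, lt x y -> lt y z -> lt x z) /\
  (forall x, countable_set (fun y => lt y x)).
Proof.
  intros HCH. destruct R_strict_well_order as [lt [Hwf [Htri Htr]]].
  destruct (classic (exists x, ~ countable_set (fun y => lt y x))) as [Hbad|Hgood].
  - destruct (well_founded_minimal _ _ Hwf Hbad) as [x0 [Hx0 Hx0m]].
    destruct (HCH (fun y => lt y x0)) as [Hc|[phi [Hinj [Hin Hsurj]]]]; [contradiction|].
    exists (fun x y => lt (phi x) (phi y)); split; [|split; [|split]].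
    + apply wf_inverse_image; auto.
    + intros x y; destruct (Htri (phi x) (phi y)) as [H|[H|H]]; auto.
    + intros x y z; apply Htr.
    + intros x; apply (countable_preimage (fun z => lt z (phi x)) phi); auto.
      apply NNPP, Hx0m, Hin.
  - exists lt; split; [|split; [|split]]; auto.
    intros x; apply NNPP; intros H; apply Hgood; eauto.
Qed.

Theorem mainTheorem11 :
  CH ->
  exists A : R2 -> Prop,
    hamel_basis A /\
    forall (p d : R2), d <> (0, 0) ->
    forall T : R -> R2, isometry_onto T (line p d) ->
      strong_sierpinski (fun x => A (T x) /\ line p d (T x)).
Proof.
  intros HCH. destruct (CH_omega1_order HCH) as [lt [Hwf [Htri [Htr Hcnt]]]].
  exists (basis_set lt Hwf); split; [apply hamel_basis_basis_set; auto|].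
  intros p d _ T [Hiso [Hline _]].
  destruct (isometry_line_point T Hiso) as [Hu HT].
  replace (fun x => basis_set lt Hwf (T x) /\ line p d (T x))
    with (fun x => basis_set lt Hwf (line_point (T 0) (vsub (T 1) (T 0)) x)).
  - apply strong_sierpinski_basis_line; auto.
  - apply functional_extensionality; intros x; apply propositional_extensionality.
    rewrite <- HT; split; [intros H; split; auto|tauto].
Qed.
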